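(* Let $\mathcal{C}_7=\{0,2,8,12,20,22,28,30,40,42,48,50,58,62,68\}$. Every pair of primes $(3t-2,3t+2)$ with $t$ an odd integer and $3t-2\geq 103$ is of the form $(3s-2,3s+2)$ with $s=5\cdot 7(2n+1)+c$ for some integer $n\geq 0$ and some $c\in\mathcal{C}_7$. *)

From mathcomp Require Import all_boot.
Definition C7 : seq nat := [:: 0; 2; 8; 12; 20; 22; 28; 30; 40; 42; 48; 50; 58; 62; 68].

From mathcomp Require Import all_boot.
From mathcomp Require Import zify.

(* A prime 3t - 2 or 3t + 2 above 35 is prime to 35 = 5 * 7, and coprimality to 35
   only depends on the residue of t modulo 70 (odd t fixes the residue modulo 2).
   Writing t = 35 (2n + 1) + c with c = (t + 35) mod 70, the even residues c < 70
   for which both 3c + 2 and 3c + 33 (i.e. 3t + 2 and 3t - 2 modulo 35) are prime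
   to 35 all lie in C_7. *)

Lemma prime_coprime_lt (p m : nat) : prime p -> 0 < m < p -> coprime p m.
Proof.
move=> p_pr /andP[m_gt0 m_lt_p]; rewrite prime_coprime //.
by apply: contraL m_lt_p => /dvdn_leq; rewrite -leqNgt; apply.
Qed.

Lemma C7_residues (c : nat) : c < 70 -> ~~ odd c ->
  coprime (3 * c + 2) 35 -> coprime (3 * c + 33) 35 -> c \in C7.
Proof. by move: c; do 70! case=> //. Qed.

Theorem proposition3p5 (t : nat) :
  odd t -> 103 <= 3 * t - 2 -> prime (3 * t - 2) -> prime (3 * t + 2) ->
  exists (n c : nat), c \in C7 /\ t = 5 * 7 * (2 * n + 1) + c.
Proof.
move=> odd_t t_large pr_minus pr_plus.
set c := (t + 35) %% 70.
have cop_mod35 a p : prime p -> 35 < p -> a = p %[mod 35] -> coprime a 35.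
  move=> p_pr lt_p a_p; rewrite -coprime_modl a_p coprime_modl.
  by apply: prime_coprime_lt; lia.
exists ((t + 35) %/ 70).-1, c; split.
  apply: C7_residues; first exact: ltn_mod.
  - by rewrite odd_mod // oddD odd_t.
  - by apply: (cop_mod35 _ _ pr_plus); lia.
  - by apply: (cop_mod35 _ _ pr_minus); lia.
have := divn_eq (t + 35) 70; rewrite -/c; lia.
Qed.
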